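(* Let $G=(V,E,w)$ be a weighted graph, $\alpha\geq 1$, $\beta\geq 0$, and consider an iteration of the $(\alpha,\beta)$-completion algorithm in which the current subgraph is $H\subseteq G$, the chosen pair is $(x,y)$ (so $\mathrm{dist}_H(x,y)>\alpha\,\mathrm{dist}_G(x,y)+\beta W_{\max}(G)$), $P_{x,y}=(x=x_0,x_1,\ldots,x_t=y)$ is the chosen shortest $x$–$y$ path in $G$, and $\mathcal{S}=([i_0,i_1],[i_1,i_2],\ldots,[i_{s-1},i_s])$ is the chosen minimal $\alpha$-segmentation of $P_{x,y}$ with respect to $H$. Let $H'=H\cup E_\alpha(\mathcal{S},H)$. Then for any $0\leq \ell<r\leq s$, \[ \mathrm{dist}_{H'}(x_{i_\ell},x_{i_r})\leq \alpha\cdot \mathrm{dist}_G(x_{i_\ell},x_{i_r}). \]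
   Context: $G$ is an undirected graph with positive edge weights $w$, in which every edge is a shortest path between its endpoints. $\mathrm{dist}_X$ is the weighted shortest-path distance in a graph $X$, and $W_{\max}(G)$ is the maximum edge weight of $G$. For a shortest path $P_{x,y}=(x_0,\ldots,x_t)$ in $G$ and a subgraph $H\subseteq G$, an $\alpha$-segmentation of $P_{x,y}$ (w.r.t. $H$) is a sequence of index intervals $([i_0,i_1],\ldots,[i_{s-1},i_s])$ with $0=i_0<i_1<\cdots<i_s=t$ such that every segment with $i_j-i_{j-1}\geq 2$ satisfies $\mathrm{dist}_H(x_{i_{j-1}},x_{i_j})\leq \alpha\,\mathrm{dist}_G(x_{i_{j-1}},x_{i_j})$. It is minimal if no consecutive sequence of its segments can be merged into one segment so as to produce another $\alpha$-segmentation of the same path. $E(\mathcal{S})$ is the set of edges $\{x_{i_{j-1}},x_{i_j}\}$ corresponding to segments with $i_j-i_{j-1}=1$, and $E_\alpha(\mathcal{S},H)=\{e=\{u,v\}\in E(\mathcal{S}) : \mathrm{dist}_H(u,v)>\alpha\, w(e)\}$. The $(\alpha,\beta)$-completion algorithm starts from an initial subgraph $H\gets H_0\subseteq G$ and, while there exist $x,y$ with $\mathrm{dist}_H(x,y)>\alpha\,\mathrm{dist}_G(x,y)+\beta W_{\max}(G)$, picks such a pair, takes a shortest $x$–$y$ path $P_{x,y}$ in $G$, finds a minimal $\alpha$-segmentation $\mathcal{S}$ of $P_{x,y}$ w.r.t. the current $H$, and updates $H\gets H\cup E_\alpha(\mathcal{S},H)$. *)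

From HB Require Import structures.
From mathcomp Require Import all_boot all_order all_algebra.
From mathcomp Require Import boolp classical_sets reals constructive_ereal ereal.
Set Implicit Arguments.
Unset Strict Implicit.
Unset Printing Implicit Defensive.
Import Order.TTheory GRing.Theory Num.Theory.
Local Open Scope ring_scope.
Local Open Scope classical_set_scope.

(* A weighted graph on a finite vertex type T is given by a symmetric edge
   relation e and a weight function w (only its values on edges matter).
   A walk from u is a sequence p of further vertices with path e u p. *)

Fixpoint wweight (T : Type) (R : numDomainType) (w : T -> T -> R)
    (u : T) (p : seq T) : R :=
  if p is v :: q then w u v + wweight w v q else 0.

(* weighted shortest-path distance (+oo if v is unreachable from u) *)
Definition dist (T : eqType) (R : realType) (e : rel T) (w : T -> T -> R)
    (u v : T) : \bar R :=
  ereal_inf [set (wweight w u p)%:E | p in [set p | path e u p /\ last u p = v]].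

Definition Wmax (T : finType) (R : realDomainType) (e : rel T)
    (w : T -> T -> R) : R :=
  \big[Num.max/0]_(u : T) \big[Num.max/0]_(v : T | e u v) w u v.

(* The path P = (x_0, ..., x_t) is represented by xs : nat -> T and t.
   A segmentation ([i_0,i_1],...,[i_{s-1},i_s]) is the index list
   I = [:: i_0; ...; i_s], so s = (size I).-1. *)
Definition is_alpha_seg (T : finType) (R : realType) (eG eH : rel T)
    (w : T -> T -> R) (alpha : R) (xs : nat -> T) (t : nat) (I : seq nat) : Prop :=
  [/\ I != [::], nth 0%N I 0 = 0%N, last 0%N I = t, sorted ltn I &
      forall j, (j.+1 < size I)%N -> (nth 0%N I j + 2 <= nth 0%N I j.+1)%N ->
        (dist eH w (xs (nth 0%N I j)) (xs (nth 0%N I j.+1))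
          <= alpha%:E * dist eG w (xs (nth 0%N I j)) (xs (nth 0%N I j.+1)))%E].

(* merging the consecutive segments l+1, ..., r (i.e. [i_l, i_r]) *)
Definition merge_segs (I : seq nat) (l r : nat) : seq nat :=
  take l.+1 I ++ drop r I.

Definition is_minimal_alpha_seg (T : finType) (R : realType) (eG eH : rel T)
    (w : T -> T -> R) (alpha : R) (xs : nat -> T) (t : nat) (I : seq nat) : Prop :=
  is_alpha_seg eG eH w alpha xs t I /\
  forall l r, (l.+1 < r)%N -> (r < size I)%N ->
    ~ is_alpha_seg eG eH w alpha xs t (merge_segs I l r).

(* edge relation of H' = H \cup E_alpha(S, H): the edges {x_{i_j}, x_{i_{j+1}}}
   of unit-length segments with dist_H > alpha * w(e). *)
Definition Ealpha (T : finType) (R : realType) (eH : rel T) (w : T -> T -> R)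
    (alpha : R) (xs : nat -> T) (I : seq nat) : rel T :=
  fun u v => has (fun j =>
      let a := xs (nth 0%N I j) in let b := xs (nth 0%N I j.+1) in
      [&& nth 0%N I j.+1 == (nth 0%N I j).+1,
          ((u == a) && (v == b)) || ((u == b) && (v == a)) &
          (alpha%:E * (w a b)%:E < dist eH w a b)%E])
    (iota 0 (size I).-1).

Definition Hunion (T : finType) (R : realType) (eH : rel T) (w : T -> T -> R)
    (alpha : R) (xs : nat -> T) (I : seq nat) : rel T :=
  fun u v => eH u v || Ealpha eH w alpha xs I u v.

From HB Require Import structures.
From mathcomp Require Import all_boot all_order all_algebra.
From mathcomp Require Import boolp classical_sets reals constructive_ereal ereal.
From mathcomp Require Import lra zify.
Set Implicit Arguments.
Unset Strict Implicit.
Import Order.TTheory GRing.Theory Num.Theory.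
Local Open Scope ring_scope.

(* Subpaths of the shortest path P are shortest paths, so dist_G(x_a, x_b) is the
   weight of P[a, b].  Each segment of S is alpha-approximated in H': long
   segments already in H by the segmentation property, unit segments either in
   H or by the edge that E_alpha adds.  The relation "dist_H'(x_a, x_b) <=
   alpha * w(P[a, b])" is transitive along P, which chains the segments
   between i_l and i_r. *)

Lemma wweight_cat (T : Type) (R : numDomainType) (w : T -> T -> R) u p q :
  wweight w u (p ++ q) = wweight w u p + wweight w (last u p) q.
Proof. by elim: p u => [|v p IH] u /=; rewrite ?add0r // IH addrA. Qed.

Section Distance.
Variables (T : eqType) (R : realType) (w : T -> T -> R).

Lemma dist_le_wweight (e : rel T) u p :
  path e u p -> (dist e w u (last u p) <= (wweight w u p)%:E)%E.
Proof. by move=> hp; apply: ge_ereal_inf; exists (wweight w u p)%:E => //; exists p. Qed.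

Lemma dist_le_subrel (e1 e2 : rel T) u v :
  subrel e1 e2 -> (dist e2 w u v <= dist e1 w u v)%E.
Proof.
move=> sub12; apply: ereal_inf_le_tmp => _ [p [hp hl] <-].
by exists p => //; split => //; apply: sub_path hp.
Qed.

Lemma dist_triangle (e : rel T) u v z a b :
  (dist e w u v <= a%:E)%E -> (dist e w v z <= b%:E)%E ->
  (dist e w u z <= (a + b)%:E)%E.
Proof.
move=> duv dvz; apply/lee_addgt0Pr => eps eps_gt0.
have eps2_gt0 : 0 < eps / 2 by rewrite divr_gt0.
have /ereal_inf_lt [_ [p [hp hlp] <-]] : (dist e w u v < (a + eps / 2)%:E)%E.
  by apply: le_lt_trans duv _; rewrite lte_fin ltrDl.
subst v.
have /ereal_inf_lt [_ [q [hq hlq] <-]] : (dist e w (last u p) z < (b + eps / 2)%:E)%E.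
  by apply: le_lt_trans dvz _; rewrite lte_fin ltrDl.
rewrite !lte_fin => hwq hwp.
have := @dist_le_wweight e u (p ++ q); rewrite cat_path hp hq last_cat hlq.
move=> /(_ isT) /le_trans; apply; rewrite -EFinD lee_fin wweight_cat; lra.
Qed.

End Distance.

Section Pieces.
Variables (T : eqType) (R : realType) (w : T -> T -> R) (xs : nat -> T).

(* The walk P[i, j] = (x_i, ..., x_j) is xs i followed by [piece i j]. *)
Definition piece i j := map xs (iota i.+1 (j - i)).

Definition pweight i j := wweight w (xs i) (piece i j).

Lemma last_piece i j : (i <= j)%N -> last (xs i) (piece i j) = xs j.
Proof.
move=> /subnKC {2}<-; rewrite /piece last_map; congr xs.
by move: (j - i)%N => n; elim: n i => [|n IH] i /=; rewrite ?addn0 // IH addnS.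
Qed.

Lemma piece_succ i : piece i i.+1 = [:: xs i.+1].
Proof. by rewrite /piece subSnn. Qed.

Lemma piece_cat i j k : (i <= j <= k)%N -> piece i k = piece i j ++ piece j k.
Proof.
case/andP=> ij jk; rewrite /piece -map_cat (_ : (k - i = (j - i) + (k - j))%N); last by lia.
by rewrite iotaD addSn subnKC.
Qed.

Lemma pweight_add i j k : (i <= j <= k)%N -> pweight i k = pweight i j + pweight j k.
Proof.
move=> ijk; rewrite /pweight (piece_cat ijk) wweight_cat last_piece //.
by case/andP: ijk.
Qed.

Lemma path_piece (e : rel T) p q i j :
  path e (xs p) (piece p q) -> (p <= i <= j)%N -> (j <= q)%N ->
  path e (xs i) (piece i j).
Proof.
move=> hP /andP[pi ij] jq.
rewrite (@piece_cat p i q) ?pi ?(leq_trans ij) // cat_path last_piece // in hP.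
case/andP: hP => _; rewrite (@piece_cat i j q) ?ij // cat_path.
by case/andP.
Qed.

Lemma dist_piece (e : rel T) p q i j :
  path e (xs p) (piece p q) -> dist e w (xs p) (xs q) = (pweight p q)%:E ->
  (p <= i <= j)%N -> (j <= q)%N -> dist e w (xs i) (xs j) = (pweight i j)%:E.
Proof.
move=> hP dP pij jq; case/andP: (pij) => pi ij.
apply/eqP; rewrite eq_le; apply/andP; split.
  by have := dist_le_wweight w (path_piece hP pij jq); rewrite last_piece.
apply/ereal_infP => _ [r [hr hlr] <-].
have hpi : path e (xs p) (piece p i) by apply: path_piece hP _ (leq_trans ij jq); rewrite leqnn.
have hjq : path e (xs j) (piece j q) by apply: path_piece hP _ _; rewrite ?jq ?(leq_trans pi).
have := @dist_le_wweight _ _ w e (xs p) (piece p i ++ r ++ piece j q).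
rewrite !cat_path !last_cat !last_piece // hlr last_piece // hpi hr hjq dP.
rewrite lee_fin !wweight_cat !last_piece // hlr => /(_ isT).
rewrite (@pweight_add p i q) ?pi ?(leq_trans ij jq) // (@pweight_add i j q) ?ij //.
rewrite lee_fin /pweight; lra.
Qed.

Definition stretch_le (e : rel T) (c : R) i j :=
  (i <= j)%N && (dist e w (xs i) (xs j) <= (c * pweight i j)%:E)%E.

Lemma stretch_le_trans (e : rel T) c : transitive (stretch_le e c).
Proof.
move=> j i k /andP[ij dij] /andP[jk djk]; rewrite /stretch_le (leq_trans ij jk).
by rewrite (@pweight_add i j k) ?ij // mulrDr (dist_triangle dij djk).
Qed.

End Pieces.

Section Completion.
Variables (R : realType) (T : finType) (eG eH : rel T) (w : T -> T -> R).
Variables (alpha : R) (xs : nat -> T) (t : nat) (I : seq nat).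
Hypothesis I_seg : is_alpha_seg eG eH w alpha xs t I.

Local Notation idx j := (nth 0%N I j).
Local Notation s := (size I).-1.
Local Notation H' := (Hunion eH w alpha xs I).

Lemma idx_lt j k : (j < k <= s)%N -> (idx j < idx k)%N.
Proof.
case: I_seg => _ _ _ I_sorted _ /andP[jk ks].
apply: (sorted_ltn_nth ltn_trans) => //; rewrite inE; lia.
Qed.

Lemma idx_le_t k : (k <= s)%N -> (idx k <= t)%N.
Proof.
case: I_seg => I_nonempty _ I_last I_sorted _ ks; rewrite -I_last -nth_last.
have I_sorted_leq : sorted leq I by apply: sub_sorted I_sorted => ? ? /ltnW.
have I_size : (0 < size I)%N by rewrite lt0n size_eq0.
by apply: (sorted_leq_nth leq_trans leqnn) => //; rewrite inE; lia.
Qed.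

Lemma Hunion_unit_edge j : (j < s)%N -> idx j.+1 = (idx j).+1 ->
  (alpha%:E * (w (xs (idx j)) (xs (idx j.+1)))%:E < dist eH w (xs (idx j)) (xs (idx j.+1)))%E ->
  H' (xs (idx j)) (xs (idx j.+1)).
Proof.
move=> js b_succ far; apply/orP; right; apply/hasP; exists j.
  by rewrite mem_iota add0n.
by rewrite /= -b_succ far !eqxx.
Qed.

Hypothesis alpha_ge1 : 1 <= alpha.
Hypothesis w_ge0 : forall u v, eG u v -> 0 <= w u v.
Hypothesis P_path : path eG (xs 0) (piece xs 0 t).
Hypothesis P_shortest : dist eG w (xs 0) (xs t) = (pweight w xs 0 t)%:E.

Lemma segment_stretch j : (j < s)%N -> stretch_le w xs H' alpha (idx j) (idx j.+1).
Proof.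
move=> js; have ab : (idx j < idx j.+1)%N by apply: idx_lt; rewrite ltnSn.
have bt := idx_le_t js.
set a := idx j in ab bt *; set b := idx j.+1 in ab bt *.
have dP : dist eG w (xs a) (xs b) = (pweight w xs a b)%:E.
  by apply: dist_piece P_path P_shortest _ bt; rewrite leq0n ltnW.
have H'_le_H : (dist H' w (xs a) (xs b) <= dist eH w (xs a) (xs b))%E.
  by apply: dist_le_subrel => u v huv; apply/orP; left.
rewrite /stretch_le ltnW //=.
case: (leqP (a + 2) b) => [long | short].
  case: I_seg => _ _ _ _ /(_ j _ long); rewrite -/a -/b dP -EFinM => seg_le.
  by apply: le_trans H'_le_H (seg_le _); lia.
have b_succ : b = a.+1 by lia.
have eab : eG (xs a) (xs b).
  have a_le_b : (0 <= a <= b)%N by rewrite leq0n ltnW.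
  by have := path_piece P_path a_le_b bt; rewrite b_succ piece_succ /= andbT.
rewrite /pweight b_succ piece_succ /= addr0 -b_succ EFinM.
case: (leP (dist eH w (xs a) (xs b)) (alpha%:E * (w (xs a) (xs b))%:E)%E) => [near | far].
  exact: le_trans H'_le_H near.
have := @dist_le_wweight _ _ w H' (xs a) [:: xs b].
rewrite /= addr0 Hunion_unit_edge // => /(_ isT) /le_trans; apply.
by rewrite -EFinM lee_fin ler_peMl // w_ge0.
Qed.

Lemma segments_stretch l r : (l < r <= s)%N -> stretch_le w xs H' alpha (idx l) (idx r).
Proof.
elim: r => [|r IH] /andP[lr rs] //.
rewrite ltnS leq_eqVlt in lr; case/orP: lr => [/eqP-> | lr]; first exact: segment_stretch.
apply: stretch_le_trans (IH _) (segment_stretch rs).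
by rewrite lr ltnW.
Qed.

End Completion.

Theorem lemma3p1 (R : realType) (T : finType) (eG eH : rel T)
    (w : T -> T -> R) (alpha beta : R) (xs : nat -> T) (t : nat) (I : seq nat) :
  (* G is an undirected (simple) graph with positive edge weights *)
  symmetric eG -> irreflexive eG ->
  (forall u v, eG u v -> w u v = w v u) ->
  (forall u v, eG u v -> 0 < w u v) ->
  (* every edge is a shortest path between its endpoints *)
  (forall u v, eG u v -> dist eG w u v = (w u v)%:E) ->
  (* H is a subgraph of G *)
  symmetric eH -> subrel eH eG ->
  1 <= alpha -> 0 <= beta ->
  (* (x, y) = (x_0, x_t) violates the (alpha, beta) condition in H *)
  (alpha%:E * dist eG w (xs 0%N) (xs t) + (beta * Wmax eG w)%:E
     < dist eH w (xs 0%N) (xs t))%E ->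
  (* P = (x_0, ..., x_t) is a shortest x-y path in G *)
  path eG (xs 0%N) (map xs (iota 1 t)) ->
  (wweight w (xs 0%N) (map xs (iota 1 t)))%:E = dist eG w (xs 0%N) (xs t) ->
  (* I is a minimal alpha-segmentation of P w.r.t. H *)
  is_minimal_alpha_seg eG eH w alpha xs t I ->
  forall l r, (l < r)%N -> (r <= (size I).-1)%N ->
    (dist (Hunion eH w alpha xs I) w (xs (nth 0%N I l)) (xs (nth 0%N I r))
      <= alpha%:E * dist eG w (xs (nth 0%N I l)) (xs (nth 0%N I r)))%E.
Proof.
move=> _ _ _ w_gt0 _ _ _ alpha_ge1 _ _ P_path P_weight [I_seg _] l r lr rs.
have w_ge0 u v : eG u v -> 0 <= w u v by move/w_gt0/ltW.
rewrite (_ : map xs (iota 1 t) = piece xs 0 t) in P_path P_weight; last by rewrite /piece subn0.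
have P_shortest := esym P_weight; rewrite -/(pweight w xs 0 t) in P_shortest.
have lrs : (l < r <= (size I).-1)%N by rewrite lr rs.
have /andP[ilr stretch] := segments_stretch I_seg alpha_ge1 w_ge0 P_path P_shortest lrs.
rewrite (dist_piece P_path P_shortest _ (idx_le_t I_seg rs)) ?ilr // -EFinM.
Qed.
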